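(* For all integers $n, k \geq 1$ with $n \geq k$, $$\sum_{i=k}^{n} \frac{s(n,i)\, S(i,k)}{i} = (-1)^{n-k} \frac{(n-1)!}{k!} \sum_{\ell=0}^{n-k} \frac{(-1)^{\ell}}{\ell!} B_{\ell}^*.$$
   Context: For $n \geq 0$, $X^{\underline{n}} := X(X-1)\cdots(X-n+1)$ ($X^{\underline{0}}=1$). The (signed) Stirling numbers of the first kind $s(n,k)$ are defined by $X^{\underline{n}} = \sum_{k=0}^{n} s(n,k) X^k$, and the Stirling numbers of the second kind $S(n,k)$ by $X^n = \sum_{k=0}^{n} S(n,k) X^{\underline{k}}$ (for all $n\ge 0$), with $s(n,k)=S(n,k)=0$ when $n<k$. The Bernoulli numbers of the second kind $B_n^*$ are defined by $\frac{t}{\log(1+t)} = \sum_{n \ge 0} B_n^* \frac{t^n}{n!}$. *)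

From mathcomp Require Import all_boot all_order all_algebra.
Set Implicit Arguments. Unset Strict Implicit. Unset Printing Implicit Defensive.
Import Order.TTheory GRing.Theory Num.Theory.
Local Open Scope ring_scope.

Definition falling_poly (n : nat) : {poly int} :=
  \prod_(i < n) ('X - (i%:Z)%:P).

(* Signed Stirling numbers of the first kind: X^{\underline n} = sum_k s(n,k) X^k.
   (Coefficients beyond degree n are 0, so s(n,k) = 0 for n < k.) *)
Definition stirling1 (n k : nat) : int := (falling_poly n)`_k.

(* Stirling numbers of the second kind, via the standard recurrence
   S(0,0)=1, S(0,k+1)=0, S(n+1,0)=0, S(n+1,k+1) = (k+1) S(n,k+1) + S(n,k),
   which is the unique family satisfying X^n = sum_k S(n,k) X^{\underline k}. *)
Fixpoint stirling2 (n k : nat) {struct n} : int :=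
  match n, k with
  | 0, 0 => 1
  | 0, _.+1 => 0
  | _.+1, 0 => 0
  | n'.+1, k'.+1 => (k'.+1)%:Z * stirling2 n' k'.+1 + stirling2 n' k'
  end.

(* Coefficients c_m of the power series log(1+t)/t = sum_m (-1)^m t^m/(m+1). *)
Definition logq_coef (m : nat) : rat := (-1) ^+ m / (m.+1)%:R.

(* Coefficients b_n of the reciprocal power series t/log(1+t) = sum_n b_n t^n,
   determined by (sum c_m t^m)(sum b_n t^n) = 1, i.e. b_0 = 1 and
   b_n = - sum_{m=1}^{n} c_m b_{n-m} (c_0 = 1). *)
Fixpoint bstar_aux (n : nat) : seq rat :=
  match n with
  | 0 => [:: 1]
  | n'.+1 =>
      let s := bstar_aux n' in
      rcons s (- \sum_(m < n'.+1) logq_coef m.+1 * nth 0 s (n' - m)%N)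
  end.

Definition bstar_coef (n : nat) : rat := nth 0 (bstar_aux n) n.

(* Bernoulli numbers of the second kind: t/log(1+t) = sum_n B*_n t^n / n!. *)
Definition bernoulli2 (n : nat) : rat := (n`!)%:R * bstar_coef n.

From HB Require Import structures.
From mathcomp Require Import all_boot all_order all_algebra.
From mathcomp Require Import ring.
Import Order.TTheory GRing.Theory Num.Theory.
Local Open Scope ring_scope.
Set Implicit Arguments. Unset Strict Implicit.

(* Write n = N + 1 and G for the primitive of (X - 1)^{\underline N} vanishing
   at 0.  As X^{\underline n} = X (X - 1)^{\underline N}, the numbers
   s(n, i) / i are the coefficients of G, and expanding X^i = sum_k S(i, k)
   X^{\underline k} turns the left-hand side into D^k G(0) / k!, where D is the
   forward difference.  Now D G(x) = int_0^1 (x + t - 1)^{\underline N} dt, and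
   the Vandermonde convolution for falling factorials, applied twice, reduces
   D^k G(0) to the integrals int_0^1 t^{\underline l} dt.  These equal B*_l:
   integrating the derivative of t^{\underline {l + 1}} over [0, 1] yields the
   recurrence that defines the coefficients of t / log(1 + t). *)

Lemma signrB (R : unitRingType) m n :
  (n <= m)%N -> (-1) ^+ (m - n) = (-1) ^+ m * (-1) ^+ n :> R.
Proof. by move=> le_nm; rewrite exprB ?unitrN1 // invr_sign. Qed.

Lemma stirling2_small i j : (i < j)%N -> stirling2 i j = 0.
Proof. by elim: i j => [|i IHi] [|j] //= lt_ij; rewrite !IHi ?mulr0 ?addr0 // ltnW. Qed.

Section FallingFactorial.
Variable R : comNzRingType.

Definition falling n : {poly R} := \prod_(i < n) ('X - i%:R%:P).

Lemma falling0 : falling 0 = 1.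
Proof. by rewrite /falling big_ord0. Qed.

Lemma fallingSr n : falling n.+1 = falling n * ('X - n%:R%:P).
Proof. by rewrite /falling big_ord_recr. Qed.

Lemma size_falling_le n : (size (falling n) <= n.+1)%N.
Proof.
elim: n => [|n IHn]; first by rewrite falling0 size_poly1.
rewrite fallingSr; apply: leq_trans (size_polyMleq _ _) _.
by rewrite size_XsubC addn2.
Qed.

Lemma falling_at0 n : (falling n).[0] = (n == 0)%:R.
Proof.
case: n => [|n]; first by rewrite falling0 hornerC.
by rewrite /falling big_ord_recl hornerM hornerXsubC subrr mul0r.
Qed.

Lemma falling_atN1 n : (falling n).[-1] = (-1) ^+ n * n`!%:R.
Proof.
elim: n => [|n IHn]; first by rewrite falling0 hornerC mul1r.
rewrite fallingSr hornerM hornerXsubC IHn factS natrM exprS -natr1; ring.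
Qed.

Lemma falling_at1 n : (falling n.+2).[1] = 0.
Proof.
elim: n => [|n IHn]; last by rewrite fallingSr hornerM IHn mul0r.
by rewrite fallingSr hornerM hornerXsubC subrr mulr0.
Qed.

Lemma fallingS n : falling n.+1 = 'X * (falling n \Po ('X - 1)).
Proof.
elim: n => [|n IHn]; first by rewrite fallingSr falling0 comp_polyC !mul1r mulr1 subr0.
rewrite [LHS]fallingSr [in RHS]fallingSr IHn comp_polyM comp_polyB comp_polyX comp_polyC.
rewrite -natr1 polyCD polyC1 -mulrA; congr (_ * (_ * _)); ring.
Qed.

Lemma fallingS_comp_Xadd1 n : falling n.+1 \Po ('X + 1) = ('X + 1) * falling n.
Proof.
elim: n => [|n IHn].
  by rewrite fallingSr falling0 mul1r mulr1 comp_polyB comp_polyX comp_polyC subr0.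
rewrite fallingSr comp_polyM IHn comp_polyB comp_polyX comp_polyC fallingSr -mulrA.
by congr (_ * (_ * _)); rewrite -natr1 polyCD polyC1; ring.
Qed.

Lemma falling_comp_XaddC N c : falling N \Po ('X + c%:P) =
  \sum_(m < N.+1) ('C(N, m)%:R * (falling m).[c]) *: falling (N - m).
Proof.
elim: N => [|N IHN].
  by rewrite big_ord1 falling0 comp_polyC hornerC mulr1 scale1r.
have split_factor (m : 'I_N.+1) : falling (N - m) * ('X + c%:P - N%:R%:P) =
    falling (N.+1 - m) + (c - m%:R) *: falling (N - m).
  have le_mN : (m <= N)%N by rewrite -ltnS.
  rewrite subSn // fallingSr natrB // -mul_polyC !polyCB; ring.
rewrite fallingSr comp_polyM IHN comp_polyB comp_polyX comp_polyC mulr_suml.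
under eq_bigr => m _ do
  rewrite -scalerAl split_factor scalerDr scalerA -mulrA -hornerXsubC -hornerM -fallingSr.
rewrite big_split /= [in RHS]big_ord_recl /= bin0 subn0 falling0 hornerC mulr1 scale1r.
under [in RHS]eq_bigr => m _ do rewrite /bump leq0n add1n binS natrD mulrDl scalerDl subSS.
rewrite [in RHS]big_split /= addrA; congr (_ + _).
rewrite big_ord_recl /= bin0 subn0 falling0 hornerC mulr1 scale1r; congr (_ + _).
rewrite [in RHS]big_ord_recr /= bin_small // mul0r scale0r addr0.
by apply: eq_bigr => m _; rewrite /bump leq0n add1n subSS.
Qed.

Lemma falling_comp_XaddC_rev N c : falling N \Po ('X + c%:P) =
  \sum_(m < N.+1) ('C(N, m)%:R * (falling (N - m)).[c]) *: falling m.
Proof.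
rewrite falling_comp_XaddC (reindex_inj rev_ord_inj) /=.
apply: eq_bigr => m _; have le_mN : (m <= N)%N by rewrite -ltnS.
by rewrite subSS subKn // bin_sub.
Qed.

Lemma deriv_falling_at0 n : (falling n.+1)^`().[0] = (-1) ^+ n * n`!%:R.
Proof.
elim: n => [|n IHn].
  by rewrite fallingSr falling0 mul1r derivXsubC hornerC mul1r.
rewrite fallingSr derivM derivXsubC mulr1 hornerD hornerM IHn hornerXsubC.
rewrite falling_at0 addr0 factS natrM exprS; ring.
Qed.

Lemma map_falling_poly n : map_poly (intr : int -> R) (falling_poly n) = falling n.
Proof.
rewrite /falling_poly /falling rmorph_prod; apply: eq_bigr => i _.
by rewrite rmorphB /= map_polyX map_polyC /= pmulrn.
Qed.

Lemma stirling1E n i : (stirling1 n i)%:~R = (falling n)`_i :> R.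
Proof. by rewrite /stirling1 -map_falling_poly coef_map. Qed.

Lemma mulX_falling j : 'X * falling j = falling j.+1 + j%:R *: falling j.
Proof. rewrite fallingSr -mul_polyC; ring. Qed.

Lemma expX_stirling2 i N : (i < N)%N ->
  'X^i = \sum_(j < N) (stirling2 i j)%:~R *: falling j.
Proof.
elim: i N => [|i IHi] [|N] // lt_iN.
  rewrite big_ord_recl /= big1 ?addr0 ?falling0 ?scale1r // => j _.
  by rewrite scale0r.
rewrite exprS (IHi N lt_iN) mulr_sumr.
under eq_bigr => j _ do rewrite -scalerAr mulX_falling scalerDr.
rewrite big_split /= big_ord_recl /= scale0r add0r.
under [RHS]eq_bigr => j _ do rewrite intrD intrM scalerDl -pmulrn -scalerA.
rewrite big_split /= addrC; congr (_ + _).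
case: N lt_iN {IHi} => [|N] // lt_iN.
rewrite big_ord_recl /= mulr0n scale0r scaler0 add0r big_ord_recr /=.
rewrite add0n stirling2_small // scale0r scaler0 addr0.
by apply: eq_bigr => j _; rewrite /bump leq0n add1n add0n scalerA mulrC -scalerA.
Qed.

End FallingFactorial.
Arguments falling {R} n.

Section ForwardDifference.
Variable R : comNzRingType.
Implicit Types p : {poly R}.

Definition fdiff p := p \Po ('X + 1) - p.

Lemma fdiff_is_linear : linear fdiff.
Proof. by move=> a p q; rewrite /fdiff linearP /= scalerBr addrACA opprD. Qed.

HB.instance Definition _ :=
  GRing.isLinear.Build R {poly R} {poly R} _ fdiff fdiff_is_linear.

Lemma fdiffC c : fdiff c%:P = 0.
Proof. by rewrite /fdiff comp_polyC subrr. Qed.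

Lemma fdiff_fallingS n : fdiff (falling n.+1) = n.+1%:R *: falling n.
Proof.
rewrite /fdiff fallingS_comp_Xadd1 fallingSr -mul_polyC -natr1 polyCD polyC1; ring.
Qed.

Lemma iter_fdiff_falling k n : iter k fdiff (falling n) =
  if (k <= n)%N then (n ^_ k)%:R *: falling (n - k) else 0.
Proof.
elim: k => [|k IHk]; first by rewrite ffactn0 scale1r subn0.
rewrite iterS IHk; case: (ltngtP k n) => [lt_kn|lt_nk|->].
- by rewrite linearZ /= -(subnSK lt_kn) fdiff_fallingS scalerA -natrM ffactnSr subnSK // subnS.
- by rewrite linear0.
- by rewrite subnn falling0 -polyC1 linearZ /= fdiffC scaler0.
Qed.

Definition fdiff_at0 k p := (iter k fdiff p).[0].

Lemma fdiff_at0_is_linear k : scalar (fdiff_at0 k).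
Proof.
move=> a p q; rewrite /fdiff_at0 -hornerZ -hornerD; congr _.[0].
by elim: k => //= k ->; rewrite linearP.
Qed.

HB.instance Definition _ k :=
  GRing.isLinear.Build R {poly R} R _ (fdiff_at0 k) (fdiff_at0_is_linear k).

Lemma fdiff_at0S k p : fdiff_at0 k.+1 p = fdiff_at0 k (fdiff p).
Proof. by rewrite /fdiff_at0 iterSr. Qed.

Lemma fdiff_at0_falling k n :
  fdiff_at0 k (falling n) = (k == n)%:R * k`!%:R.
Proof.
rewrite /fdiff_at0 iter_fdiff_falling; case: ltngtP => [lt_kn|lt_nk|->].
- by rewrite hornerZ falling_at0 subn_eq0 leqNgt lt_kn mulr0 mul0r.
- by rewrite horner0 mul0r.
- by rewrite hornerZ falling_at0 subnn ffactnn mulr1 mul1r.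
Qed.

Lemma fdiff_at0_sum_falling k N (a : nat -> R) : (k < N)%N ->
  fdiff_at0 k (\sum_(m < N) a m *: falling m) = a k * k`!%:R.
Proof.
move=> lt_kN; rewrite linear_sum (bigD1 (Ordinal lt_kN)) //= big1 => [|m ne_mk].
  by rewrite addr0 linearZ /= fdiff_at0_falling eqxx mul1r.
by rewrite linearZ /= fdiff_at0_falling eq_sym (negbTE (ne_mk : m != k :> nat)) mul0r mulr0.
Qed.

Lemma fdiff_at0_Xn k i : fdiff_at0 k 'X^i = (stirling2 i k)%:~R * k`!%:R.
Proof.
have lt_iN : (i < (maxn i k).+1)%N by rewrite ltnS leq_maxl.
rewrite (expX_stirling2 _ lt_iN) (fdiff_at0_sum_falling (fun j => (stirling2 i j)%:~R)) //.
by rewrite ltnS leq_maxr.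
Qed.

Lemma fdiff_at0_stirling2 k N p : (size p <= N)%N ->
  fdiff_at0 k p = (\sum_(i < N) p`_i * (stirling2 i k)%:~R) * k`!%:R.
Proof.
move=> le_pN; have {1}-> : p = \sum_(i < N) p`_i *: 'X^i.
  rewrite -poly_def; apply/polyP => i; rewrite coef_poly.
  by case: ltnP => // le_Ni; rewrite nth_default // (leq_trans le_pN).
rewrite linear_sum mulr_suml; apply: eq_bigr => i _.
by rewrite linearZ /= fdiff_at0_Xn mulrA.
Qed.
End ForwardDifference.

Section CharacteristicZero.
Variable R : fieldType.
Hypothesis R_pchar0 : [pchar R] =i pred0.
Implicit Types p q : {poly R}.

Lemma natf_eq0 n : (n%:R == 0 :> R) = (n == 0)%N.
Proof. by move/pcharf0P: R_pchar0. Qed.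

Lemma fact_neq0 n : n`!%:R != 0 :> R.
Proof. by rewrite natf_eq0 -lt0n fact_gt0. Qed.

Lemma natf_inj : injective (fun n : nat => n%:R : R).
Proof.
move=> m n /= eq_mn; wlog le_mn : m n eq_mn / (m <= n)%N.
  by move=> wlog; case/orP: (leq_total m n) => /wlog ->.
apply/eqP; rewrite eqn_leq le_mn -subn_eq0 -natf_eq0 natrB // subr_eq0 eq_sym.
exact/eqP.
Qed.

Lemma poly_horner_inj p q : (forall x, p.[x] = q.[x]) -> p = q.
Proof.
move=> eq_pq; apply/eqP; rewrite -subr_eq0; apply/eqP.
apply: (@roots_geq_poly_eq0 _ _ [seq i%:R | i <- iota 0 (size (p - q))]).
- by apply/allP => _ /mapP[i _ ->]; rewrite /root hornerD hornerN eq_pq subrr.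
- by rewrite map_inj_uniq ?iota_uniq //; apply: natf_inj.
- by rewrite size_map size_iota.
Qed.

Definition prim p := 'X * \poly_(i < size p) (p`_i / i.+1%:R).

Lemma coef_prim0 p : (prim p)`_0 = 0.
Proof. by rewrite coefXM. Qed.

Lemma coef_primS p i : (prim p)`_i.+1 = p`_i / i.+1%:R.
Proof.
rewrite coefXM coef_poly /=; case: ltnP => // le_pi.
by rewrite nth_default // mul0r.
Qed.

Lemma prim_is_linear : linear prim.
Proof.
move=> a p q; apply/polyP => -[|i].
  by rewrite coefD coefZ !coef_prim0 mulr0 addr0.
by rewrite coefD coefZ !coef_primS coefD coefZ mulrDl mulrA.
Qed.

HB.instance Definition _ :=
  GRing.isLinear.Build R {poly R} {poly R} _ prim prim_is_linear.

Lemma deriv_prim p : (prim p)^`() = p.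
Proof.
apply/polyP => i; rewrite coef_deriv coef_primS -[_ *+ i.+1]mulr_natr divfK //.
by rewrite natf_eq0.
Qed.

Lemma prim_deriv p : prim p^`() = p - (p`_0)%:P.
Proof.
apply/polyP => -[|i]; first by rewrite coef_prim0 coefB coefC subrr.
by rewrite coef_primS coef_deriv coefB coefC subr0 -[_ *+ i.+1]mulr_natr mulfK // natf_eq0.
Qed.

Definition integral01 p := (prim p).[1].

Lemma integral01_is_linear : scalar integral01.
Proof. by move=> a p q; rewrite /integral01 linearP hornerD hornerZ. Qed.

HB.instance Definition _ :=
  GRing.isLinear.Build R {poly R} R _ integral01 integral01_is_linear.

Lemma integral01_deriv p : integral01 p^`() = p.[1] - p.[0].
Proof. by rewrite /integral01 prim_deriv hornerD hornerN hornerC horner_coef0. Qed.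

Lemma prim_increment p c :
  (prim p).[c + 1] - (prim p).[c] = integral01 (p \Po ('X + c%:P)).
Proof.
set q := prim p \Po ('X + c%:P).
have dq : q^`() = p \Po ('X + c%:P).
  by rewrite deriv_comp deriv_prim derivD derivX derivC addr0 mulr1.
rewrite -dq integral01_deriv !horner_comp !hornerD !hornerX !hornerC add0r.
by rewrite [1 + c]addrC.
Qed.

Lemma deriv_falling N : (falling N)^`() =
  \sum_(m < N.+1) ('C(N, m)%:R * (falling m)^`().[0]) *: falling (N - m)
  :> {poly R}.
Proof.
apply: poly_horner_inj => x.
have deriv_shift : (falling N \Po ('X + x%:P))^`() = (falling N)^`() \Po ('X + x%:P).
  by rewrite deriv_comp derivD derivX derivC addr0 mulr1.
have := congr1 (horner^~ 0) deriv_shift.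
rewrite /= horner_comp hornerD hornerX hornerC add0r => <-.
rewrite falling_comp_XaddC_rev linear_sum !horner_sum; apply: eq_bigr => m _.
by rewrite linearZ /= !hornerZ mulrAC.
Qed.

Definition gregory l : R := integral01 (falling l) / l`!%:R.

Lemma gregory0 : gregory 0 = 1.
Proof.
have := integral01_deriv 'X; rewrite derivX !hornerX subr0 => int1.
by rewrite /gregory falling0 int1 divr1.
Qed.

Lemma sum_gregory n :
  \sum_(j < n.+2) (-1) ^+ j / j.+1%:R * gregory (n.+1 - j) = 0.
Proof.
have : integral01 (falling n.+2)^`() = 0.
  by rewrite integral01_deriv falling_at1 falling_at0 subrr.
rewrite deriv_falling linear_sum big_ord_recl /= falling0 derivC horner0.
rewrite mulr0 scale0r linear0 add0r => int_deriv.
apply: (mulfI (fact_neq0 n.+2)); rewrite mulr0 -[RHS]int_deriv mulr_sumr.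
apply: eq_bigr => j _; have le_jn : (j.+1 <= n.+2)%N by rewrite !ltnS -ltnS.
rewrite linearZ /= deriv_falling_at0 /bump leq0n add1n /gregory.
rewrite -(bin_fact le_jn) subSS factS !natrM; field.
by rewrite fact_neq0 nat1r natf_eq0.
Qed.

Lemma gregoryS n :
  gregory n.+1 = - \sum_(j < n.+1) (-1) ^+ j.+1 / j.+2%:R * gregory (n - j).
Proof.
apply/eqP; rewrite -addr_eq0; apply/eqP.
rewrite -[RHS](sum_gregory n) [RHS]big_ord_recl /= expr0 subn0 mulr1n divr1 mul1r.
by congr (_ + _); apply: eq_bigr => j _; rewrite /bump leq0n add1n subSS.
Qed.

Lemma integral01_falling_Xsub1 M : integral01 (falling M \Po ('X - 1)) =
  (-1) ^+ M * M`!%:R * \sum_(l < M.+1) (-1) ^+ l / l`!%:R * integral01 (falling l).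
Proof.
rewrite -polyC1 -polyCN falling_comp_XaddC_rev linear_sum mulr_sumr.
apply: eq_bigr => l _; have le_lM : (l <= M)%N by rewrite -ltnS.
rewrite linearZ /= falling_atN1 signrB // -(bin_fact le_lM) !natrM; field.
exact: fact_neq0.
Qed.

Lemma fdiff_prim_falling_Xsub1 N : fdiff (prim (falling N \Po ('X - 1))) =
  \sum_(m < N.+1) ('C(N, m)%:R * integral01 (falling (N - m) \Po ('X - 1))) *: falling m.
Proof.
apply: poly_horner_inj => x.
rewrite /fdiff hornerD hornerN horner_comp hornerD hornerX hornerC prim_increment.
have shifts_commute : (falling N \Po ('X - 1)) \Po ('X + x%:P) =
    (falling N \Po ('X + x%:P)) \Po ('X - 1).
  rewrite -!comp_polyA -polyC1 !comp_polyB !comp_polyD !comp_polyX !comp_polyC.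
  by rewrite addrAC.
rewrite shifts_commute falling_comp_XaddC !linear_sum horner_sum; apply: eq_bigr => m _.
by rewrite !linearZ /= hornerZ mulrAC.
Qed.

Lemma fdiff_at0_prim_falling_Xsub1 N k : (k <= N)%N ->
  fdiff_at0 k.+1 (prim (falling N \Po ('X - 1))) =
  'C(N, k)%:R * k`!%:R * integral01 (falling (N - k) \Po ('X - 1)).
Proof.
move=> le_kN; rewrite fdiff_at0S fdiff_prim_falling_Xsub1.
pose a m := 'C(N, m)%:R * integral01 (falling (N - m) \Po ('X - 1)).
by rewrite (fdiff_at0_sum_falling a) ?ltnS // mulrAC.
Qed.

(* At [i = 0] both sides vanish, the right one because [x / 0 = 0]. *)
Lemma coef_prim_falling_Xsub1 N i :
  (prim (falling N \Po ('X - 1)))`_i = (stirling1 N.+1 i)%:~R / i%:R.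
Proof.
case: i => [|i]; first by rewrite coef_prim0 invr0 mulr0.
by rewrite coef_primS stirling1E fallingS coefXM.
Qed.

Lemma sum_stirling1_stirling2 N k : (k <= N.+2)%N ->
  \sum_(k <= i < N.+2) (stirling1 N.+1 i)%:~R * (stirling2 i k)%:~R / i%:R =
  fdiff_at0 k (prim (falling N \Po ('X - 1))) / k`!%:R.
Proof.
move=> le_kN; set G := prim _.
have size_G : (size G <= N.+2)%N.
  apply/leq_sizeP => i le_Ni; rewrite coef_prim_falling_Xsub1 stirling1E.
  by rewrite nth_default ?mul0r // (leq_trans (size_falling_le R N.+1)).
have low_terms : \sum_(0 <= i < k) G`_i * (stirling2 i k)%:~R = 0.
  by rewrite big_nat big1 // => i /andP[_ lt_ik]; rewrite stirling2_small // mulr0.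
rewrite (fdiff_at0_stirling2 _ size_G) mulfK ?fact_neq0 //.
rewrite -(big_mkord xpredT (fun i => G`_i * (stirling2 i k)%:~R)).
rewrite [RHS](@big_cat_nat _ _ _ k) //= low_terms add0r.
by apply: eq_bigr => i _; rewrite coef_prim_falling_Xsub1 mulrAC.
Qed.

End CharacteristicZero.

Lemma size_bstar_aux n : size (bstar_aux n) = n.+1.
Proof. by elim: n => //= n IHn; rewrite size_rcons IHn. Qed.

Lemma nth_bstar_aux n j : (j <= n)%N -> nth 0 (bstar_aux n) j = bstar_coef j.
Proof.
elim: n => [|n IHn]; first by rewrite leqn0 => /eqP ->.
rewrite leq_eqVlt => /predU1P[-> //|lt_jn].
by rewrite /= nth_rcons size_bstar_aux lt_jn IHn.
Qed.

Lemma bstar_coefS n :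
  bstar_coef n.+1 = - \sum_(m < n.+1) logq_coef m.+1 * bstar_coef (n - m).
Proof.
rewrite /bstar_coef /= nth_rcons size_bstar_aux ltnn eqxx.
by congr (- _); apply: eq_bigr => m _; rewrite nth_bstar_aux // leq_subr.
Qed.

Lemma bstar_coef_gregory l : bstar_coef l = gregory rat l.
Proof.
elim/ltn_ind: l => -[|l] IHl; first by rewrite (gregory0 (pchar_num _)).
rewrite bstar_coefS (gregoryS (pchar_num _)); congr (- _).
by apply: eq_bigr => m _; rewrite IHl // ltnS leq_subr.
Qed.

Lemma bernoulli2_integral01 l : bernoulli2 l = integral01 (falling l).
Proof.
by rewrite /bernoulli2 bstar_coef_gregory /gregory mulrC divfK // (fact_neq0 (pchar_num _)).
Qed.

Theorem corollary5 (n k : nat) (hk : (1 <= k)%N) (hkn : (k <= n)%N) :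
  \sum_(k <= i < n.+1) ((stirling1 n i)%:~R * (stirling2 i k)%:~R / (i%:R : rat))
  = (-1) ^+ (n - k) * ((n.-1)`!)%:R / (k`!)%:R
    * \sum_(l < (n - k).+1) ((-1) ^+ l / (l`!)%:R * bernoulli2 l).
Proof.
case: n hkn => [|N]; first by case: k hk.
case: k hk => [|k] // _; rewrite ltnS => le_kN.
have rat_pchar0 := pchar_num rat.
rewrite (sum_stirling1_stirling2 rat_pchar0) ?ltnS ?leqW //.
rewrite (fdiff_at0_prim_falling_Xsub1 rat_pchar0) // (integral01_falling_Xsub1 rat_pchar0) subSS /=.
under [in RHS]eq_bigr => l _ do rewrite bernoulli2_integral01.
rewrite -(bin_fact le_kN) !natrM; field.
by rewrite (fact_neq0 rat_pchar0) nat1r (natf_eq0 rat_pchar0).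
Qed.
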